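(* Let $\alpha\in\{0,1\}^n$ with $|\alpha|=k$, let $u_1<\dots<u_k$ be the positions of its ones, and let $\lambda_\alpha$ be the partition whose conjugate is $\lambda'_\alpha=(\lambda'_1,\dots,\lambda'_k)$ with $\lambda'_j=n-k-u_j+j$. Then, as polynomials, $$s_{\lambda_\alpha}(x_1,\dots,x_{n-k})=\det\big(e_{n-k+i-u_j}(x_1,\dots,x_{n-k})\big)_{i,j=1}^k=\det\big(e_{n-k+i-u_j}(x_1,\dots,x_{n-k+i-1})\big)_{i,j=1}^k .$$
   Context: $s_\lambda(x_1,\dots,x_m)$ is the Schur polynomial of the partition $\lambda$ in $m$ variables; $e_r(y_1,\dots,y_m)$ is the $r$-th elementary symmetric polynomial, with $e_0=1$, $e_r=0$ for $r<0$ or $r>m$. Note $\lambda'_j$ is the number of zeros of $\alpha$ to the right of its $j$-th one. *)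

From HB Require Import structures.
From mathcomp Require Import all_boot all_order all_algebra.
Set Implicit Arguments. Unset Strict Implicit. Unset Printing Implicit Defensive.
Import Order.TTheory GRing.Theory Num.Theory.
Local Open Scope ring_scope.

(* Variables are an infinite family x : nat -> R; x_{t+1} is (x t). *)

Definition esym (R : comPzRingType) (m r : nat) (x : nat -> R) : R :=
  \sum_(S : {set 'I_m} | #|S| == r) \prod_(i in S) x (val i).

Definition esymD (R : comPzRingType) (m a b : nat) (x : nat -> R) : R :=
  if (b <= a)%N then esym m (a - b) x else 0.

(* Partition lam : seq nat (weakly decreasing); cell (i,j) (0-indexed) is in
   the Young diagram iff j < lam_i. *)
Definition in_diag (lam : seq nat) (i j : nat) : bool := (j < nth 0%N lam i)%N.

(* Semistandard Young tableau with entries in {1..m}, encoded as a filling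
   T : 'I_(size lam) * 'I_(head 0 lam) -> 'I_m.+1 where 0 marks a cell
   outside the diagram and entry e >= 1 inside. *)
Definition is_ssyt (lam : seq nat) (m : nat)
   (T : {ffun 'I_(size lam) * 'I_(head 0%N lam) -> 'I_m.+1}) : bool :=
  [forall c : 'I_(size lam) * 'I_(head 0%N lam),
     (in_diag lam c.1 c.2 == (0 < T c)%N)] &&
  [forall c : 'I_(size lam) * 'I_(head 0%N lam),
   forall d : 'I_(size lam) * 'I_(head 0%N lam),
     (in_diag lam c.1 c.2 && in_diag lam d.1 d.2) ==>
     ((((c.1 == d.1 :> nat) && (c.2.+1 == d.2 :> nat)) ==> (T c <= T d)%N) &&
      (((c.1.+1 == d.1 :> nat) && (c.2 == d.2 :> nat)) ==> (T c < T d)%N))].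

Definition schur (R : comPzRingType) (lam : seq nat) (m : nat) (x : nat -> R) : R :=
  \sum_(T | @is_ssyt lam m T)
     \prod_(c : 'I_(size lam) * 'I_(head 0%N lam) | in_diag lam c.1 c.2)
        x (T c).-1.

Definition conj_part (s : seq nat) : seq nat :=
  mkseq (fun i => count (fun l => (i < l)%N) s) (\max_(l <- s) l)%N.

Definition ones_pos (alpha : seq bool) : seq nat :=
  [seq i.+1 | i <- iota 0 (size alpha) & nth false alpha i].

Definition lam_conj (alpha : seq bool) : seq nat :=
  let n := size alpha in let k := count id alpha in
  [seq ((n - k + j.+1) - nth 0%N (ones_pos alpha) j)%N | j <- iota 0 k].

Definition lam_alpha (alpha : seq bool) : seq nat := conj_part (lam_conj alpha).

From Pilot Require Import Defs.
From mathcomp Require Import all_boot all_order all_algebra.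
From mathcomp Require Import zify perm.
Set Implicit Arguments. Unset Strict Implicit. Unset Printing Implicit Defensive.
Import GRing.Theory Num.Theory.

Local Open Scope ring_scope.

(* The Schur polynomial, as a sum over semistandard tableaux, and the
   determinant det(e_(i + c_j - j)) satisfy the same recursion in the number
   m of variables.  Deleting the entries m+1 of a tableau of shape c (given by
   column lengths) leaves a tableau of the shape obtained by removing the
   bottom boxes of a set S of columns forming a horizontal strip, with weight
   x_(m+1)^|S|.  On the determinant side, e_r(x_1..x_(m+1)) = e_r(x_1..x_m) +
   x_(m+1) e_(r-1)(x_1..x_m) expands each column, and the terms for sets S
   that are not horizontal strips vanish, having two equal columns or a zero
   column.  For m = 0 both sides are 1 or 0 according as the shape is empty.
   With c = lambda'_alpha, i + c_j - j = n - k + i - u_j.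
   The second identity is a unitriangular row reduction driven by the same
   recursion. *)

Section ElementarySymmetric.
Variables (R : comPzRingType) (x : nat -> R).

Lemma esym0 m : Defs.esym m 0 x = 1.
Proof.
rewrite /Defs.esym (big_pred1 set0) ?big_set0 // => S /=.
by rewrite cards_eq0.
Qed.

Lemma esym0S r : Defs.esym 0 r.+1 x = 0.
Proof.
rewrite /Defs.esym big_pred0 // => S; apply/negbTE/negP => /eqP cardS.
by have := max_card (pred_of_set S); rewrite card_ord cardS.
Qed.

Definition widen_set m (S : {set 'I_m}) : {set 'I_m.+1} :=
  [set widen_ord (leqnSn m) i | i in S].

Definition narrow_set m (S : {set 'I_m.+1}) : {set 'I_m} :=
  [set i | widen_ord (leqnSn m) i \in S].

Lemma widen_ord_max_neq m (i : 'I_m) : widen_ord (leqnSn m) i != ord_max.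
Proof. by rewrite -val_eqE /= ltn_eqF. Qed.

Lemma widen_ordS_inj m : injective (widen_ord (leqnSn m)).
Proof. by move=> i j /(congr1 val) /= /val_inj. Qed.

Lemma narrow_widen_set m (S : {set 'I_m}) : narrow_set (widen_set S) = S.
Proof. by apply/setP => i; rewrite !inE mem_imset //; apply: widen_ordS_inj. Qed.

Lemma narrow_setU1_max m (S : {set 'I_m.+1}) :
  narrow_set (ord_max |: S) = narrow_set S.
Proof. by apply/setP => i; rewrite !inE (negbTE (widen_ord_max_neq i)). Qed.

Lemma widen_narrow_set m (S : {set 'I_m.+1}) :
  widen_set (narrow_set S) = S :\ ord_max.
Proof.
apply/setP => i; rewrite !inE; apply/imsetP/andP => [[j] | [ne iS]].
  by rewrite inE => jS ->; rewrite widen_ord_max_neq.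
have im : (i < m)%N by move: ne (ltn_ord i); rewrite -val_eqE /=; lia.
have Ei : widen_ord (leqnSn m) (Ordinal im) = i by apply: val_inj.
by exists (Ordinal im); rewrite ?inE Ei.
Qed.

Lemma max_notin_widen_set m (S : {set 'I_m}) : ord_max \notin widen_set S.
Proof. by apply/imsetP => -[i _] /eqP; rewrite eq_sym (negbTE (widen_ord_max_neq i)). Qed.

Lemma card_widen_set m (S : {set 'I_m}) : #|widen_set S| = #|S|.
Proof. exact/card_imset/widen_ordS_inj. Qed.

Lemma prod_widen_set m (S : {set 'I_m}) :
  \prod_(i in widen_set S) x i = \prod_(i in S) x i.
Proof. by rewrite big_imset //= => i j _ _; apply: widen_ordS_inj. Qed.

Lemma esymS m r :
  Defs.esym m.+1 r.+1 x = Defs.esym m r.+1 x + x m * Defs.esym m r x.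
Proof.
rewrite /Defs.esym (bigID (fun S : {set 'I_m.+1} => ord_max \in S)) /= addrC.
congr (_ + _).
  rewrite (reindex_onto (@widen_set m) (@narrow_set m)) /=; last first.
    move=> S /andP[_ maxS]; rewrite widen_narrow_set.
    by apply/setP => i; rewrite !inE; case: eqP => // ->; rewrite (negbTE maxS).
  apply: eq_big => [S|S _]; last exact: prod_widen_set.
  by rewrite narrow_widen_set eqxx card_widen_set max_notin_widen_set !andbT.
rewrite big_distrr /=.
rewrite (reindex_onto (fun S => ord_max |: widen_set S) (@narrow_set m)) /=; last first.
  by move=> S /andP[_ maxS]; rewrite widen_narrow_set setD1K.
apply: eq_big => [S|S _].
  rewrite setU11 andbT cardsU1 max_notin_widen_set card_widen_set add1n eqSS.
  by rewrite narrow_setU1_max narrow_widen_set eqxx andbT.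
by rewrite big_setU1 ?max_notin_widen_set //= prod_widen_set.
Qed.

Definition esymz m (z : int) : R := if z is Posz r then Defs.esym m r x else 0.

Lemma esymz_lt0 m z : z < 0 -> esymz m z = 0.
Proof. by case: z. Qed.

Lemma esymzS m z : esymz m.+1 z = esymz m z + x m * esymz m (z - 1).
Proof.
case: z => [[|r]|r] /=; first by rewrite !esym0 mulr0 addr0.
  by rewrite esymS subn1.
by rewrite mulr0 addr0.
Qed.

Lemma esymD_esymz m a b : esymD m a b x = esymz m (a%:Z - b%:Z).
Proof.
rewrite /esymD; case: leqP => ba; first by rewrite subzn.
by rewrite esymz_lt0 // subr_lt0 ltz_nat.
Qed.

End ElementarySymmetric.

Section DeterminantExpansion.
Variable R : comPzRingType.

Lemma prod_scale_in k (S : {set 'I_k}) (a : R) (f g : 'I_k -> R) :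
  \prod_i (if i \in S then a * f i else g i) =
  a ^+ #|S| * \prod_i (if i \in S then f i else g i).
Proof.
rewrite (bigID (mem S)) /= [in RHS](bigID (mem S)) /= mulrA.
congr (_ * _); last by apply: eq_bigr => i /negbTE ->.
rewrite -prodr_const -big_split /=; apply: eq_bigr => i iS.
by rewrite iS.
Qed.

Lemma det_scale_add k (a : R) (A B : 'I_k -> 'I_k -> R) :
  \det (\matrix_(i, j) (a * B i j + A i j)) =
  \sum_(S : {set 'I_k}) a ^+ #|S| *
     \det (\matrix_(i, j) (if j \in S then B i j else A i j)).
Proof.
have detE (S : {set 'I_k}) :
    \det (\matrix_(i, j) (if j \in S then B i j else A i j)) =
    \sum_(s : 'S_k) (-1) ^+ s * \prod_i (if i \in S then B (s i) i else A (s i) i).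
  rewrite -det_tr /determinant; apply: eq_bigr => s _; congr (_ * _).
  by apply: eq_bigr => i _; rewrite !mxE.
under [RHS]eq_bigr => S _ do rewrite detE big_distrr /=.
rewrite -det_tr /determinant exchange_big /=; apply: eq_bigr => s _.
under eq_bigr => i _ do rewrite !mxE.
rewrite bigA_distr big_distrr /=; apply: eq_bigr => S _.
by rewrite prod_scale_in mulrCA.
Qed.

Lemma det_col0 k (M : 'M[R]_k) (j : 'I_k) : (forall i, M i j = 0) -> \det M = 0.
Proof. by move=> Mj0; rewrite (expand_det_col _ j) big1 // => i _; rewrite Mj0 mul0r. Qed.

Lemma det_eq_cols k (M : 'M[R]_k) (j1 j2 : 'I_k) :
  j1 != j2 -> (forall i, M i j1 = M i j2) -> \det M = 0.
Proof. by move=> ne eqM; rewrite -det_tr (determinant_alternate ne) // => i; rewrite !mxE. Qed.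

End DeterminantExpansion.

Section JacobiTrudiDeterminant.
Variables (R : comPzRingType) (x : nat -> R).

Definition jt_det k m (c : nat -> nat) : R :=
  \det (\matrix_(i < k, j < k) esymz x m (i%:Z + (c j)%:Z - j%:Z)).

Definition memn k (S : {set 'I_k}) (j : nat) : bool := [exists i in S, val i == j].

Lemma memnE k (S : {set 'I_k}) (j : 'I_k) : memn S j = (j \in S).
Proof.
apply/existsP/idP => [[i /andP[iS /eqP ij]] | jS]; last by exists j; rewrite jS eqxx.
by rewrite -(val_inj ij).
Qed.

Lemma memn_out k (S : {set 'I_k}) (j : nat) : (k <= j)%N -> memn S j = false.
Proof.
move=> kj; apply/existsP => -[i /andP[_ /eqP ij]].
by move: (ltn_ord i); rewrite ij ltnNge kj.
Qed.

(* Removing the bottom box of each column in S from the shape with column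
   lengths c leaves a shape: the removed boxes form a horizontal strip. *)
Definition hstrip k (c : nat -> nat) (S : {set 'I_k}) : bool :=
  [forall j : 'I_k, (j \in S) ==>
     (0 < c j)%N && ((j.+1 < k)%N ==> (c j.+1 < c j)%N || memn S j.+1)].

Lemma hstripP k c (S : {set 'I_k}) (j : 'I_k) : hstrip c S -> j \in S ->
  (0 < c j)%N /\ ((j.+1 < k)%N -> (c j.+1 < c j)%N \/ memn S j.+1).
Proof.
move/forallP => /(_ j) /implyP strip /strip /andP[-> /implyP next]; split => // jk.
by case/orP: (next jk) => ->; [left | right].
Qed.

Section Expansion.
Variables (k m : nat) (c : nat -> nat).
Hypothesis c_decr : forall j, (c j.+1 <= c j)%N.

Definition strip_mx (S : {set 'I_k}) : 'M[R]_k :=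
  \matrix_(i, j) (if j \in S then esymz x m (i%:Z + (c j)%:Z - j%:Z - 1)
                  else esymz x m (i%:Z + (c j)%:Z - j%:Z)).

Lemma det_strip_mx_eq0 S : ~~ hstrip c S -> \det (strip_mx S) = 0.
Proof.
have eq_cols (j : 'I_k) (jk : (j.+1 < k)%N) :
    j \in S -> c j.+1 = c j -> ~~ memn S j.+1 -> \det (strip_mx S) = 0.
  move=> jS cj nS; apply: (@det_eq_cols _ _ _ j (Ordinal jk)).
    by rewrite -val_eqE /= ltn_eqF.
  move=> i; rewrite !mxE jS -memnE (negbTE nS) /= cj; congr esymz; lia.
case/forallPn => j0; rewrite negb_imply => /andP[j0S].
rewrite negb_and => /orP[| ]; last first.
  rewrite negb_imply negb_or => /and3P[jk nlt nS].
  by apply: (eq_cols j0 jk j0S) => //; apply/eqP; rewrite eqn_leq c_decr leqNgt.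
rewrite lt0n negbK => /eqP c0.
have [j /andP[jS /eqP cj] jmax] :=
  @arg_maxnP _ j0 (fun j => (j \in S) && (c j == 0)%N) val (introT andP (conj j0S (introT eqP c0))).
have cjS : c j.+1 = c j by move: (c_decr j); rewrite cj; lia.
case: (ltnP j.+1 k) => [jk | kj].
  apply: (eq_cols j jk jS cjS); apply/negP; rewrite (memnE S (Ordinal jk)) => j1S.
  by have := jmax (Ordinal jk); rewrite j1S cjS cj eqxx /= => /(_ isT); rewrite ltnn.
apply: (@det_col0 _ _ _ j) => i; rewrite mxE jS cj esymz_lt0 //.
by move: (ltn_ord i); lia.
Qed.

Lemma jt_detS : jt_det k m.+1 c =
  \sum_(S : {set 'I_k} | hstrip c S) x m ^+ #|S| * jt_det k m (fun j => c j - memn S j)%N.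
Proof.
rewrite /jt_det.
under eq_mx => i j do rewrite esymzS addrC.
rewrite det_scale_add (bigID (hstrip c)) /= [X in _ + X]big1 ?addr0; last first.
  by move=> S /det_strip_mx_eq0; rewrite /strip_mx => ->; rewrite mulr0.
apply: eq_bigr => S strip; congr (_ * \det _); apply/matrixP => i j.
rewrite !mxE memnE; case: ifP => jS; last by rewrite subn0.
have [cj _] := hstripP strip jS.
by congr esymz; rewrite -(subzn cj); lia.
Qed.

End Expansion.

Lemma jt_det0 k c : (forall j, (c j.+1 <= c j)%N) -> c k = 0%N ->
  jt_det k 0 c = (c 0%N == 0%N)%:R.
Proof.
move=> c_decr ck; have c_eq0 (j : nat) : c 0%N = 0%N -> c j = 0%N.
  by move=> c0; elim: j => // j IH; move: (c_decr j); rewrite IH; lia.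
case: (posnP (c 0%N)) => c0.
  rewrite -(det1 R k) /jt_det; congr (\det _); apply/matrixP => i j.
  rewrite !mxE c_eq0 // addr0; case: (ltngtP i j) => ij.
  - rewrite esymz_lt0 ?subr_lt0 ?ltz_nat //.
    by rewrite (_ : (i == j) = false) //; apply/negbTE; rewrite -val_eqE /= ltn_eqF.
  - rewrite (_ : (i == j) = false); last by apply/negbTE; rewrite -val_eqE /= gtn_eqF.
    by rewrite subzn ?(ltnW ij) // -(subnSK ij) /= esym0S.
  - by rewrite (val_inj ij) eqxx subrr /= esym0.
have k0 : (0 < k)%N by case: k ck c0 => [-> |].
rewrite /jt_det /= (@det_col0 _ _ _ (Ordinal k0)) // => i; rewrite !mxE /= addn0.
by rewrite -(prednK (ltn_addl i c0)) esym0S.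
Qed.

(* For i > s, esymzS expresses row i of [shift_mx s.+1] as row i of
   [shift_mx s] plus [x (m + s)] times its row i - 1: a unitriangular row
   operation. *)
Definition shift_mx k m s (w : 'I_k -> int) : 'M[R]_k :=
  \matrix_(i, j) esymz x (m + minn i s) (i%:Z + w j).

Lemma det_shift_mxS k m s w : \det (shift_mx m s.+1 w) = \det (@shift_mx k m s w).
Proof.
pose L : 'M[R]_k := \matrix_(i, j)
   ((i == j)%:R + (if (s < i)%N && (j.+1 == i) then x (m + s) else 0)).
have -> : shift_mx m s.+1 w = L *m shift_mx m s w.
  apply/matrixP => i j; rewrite !mxE.
  under eq_bigr => l _ do rewrite !mxE mulrDl.
  rewrite big_split /= (bigD1 i) //= eqxx mul1r big1 ?addr0; last first.
    by move=> l /negbTE; rewrite eq_sym => ->; rewrite mul0r.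
  case: (ltnP s i) => si /=; last first.
    rewrite big1 ?addr0 => [|l _]; last by rewrite mul0r.
    by rewrite (_ : minn i s.+1 = i) //; lia.
  have i1k : (i.-1 < k)%N by move: (ltn_ord i); lia.
  rewrite (bigD1 (Ordinal i1k)) //= big1 ?addr0; last first.
    move=> l /eqP ne; case: eqP => [li|_]; last by rewrite mul0r.
    by case: ne; apply: val_inj => /=; lia.
  have -> : (i.-1.+1 == i) = true by apply/eqP; lia.
  have -> : minn i s.+1 = s.+1 by lia.
  have -> : minn i.-1 s = s by lia.
  rewrite addnS esymzS; congr (_ + _ * esymz x _ _).
  by rewrite predn_int 1?addrAC //; move: si; case: (nat_of_ord i).
rewrite det_mulmx det_trig ?big1 ?mul1r //.
  by move=> i _; rewrite !mxE eqxx (gtn_eqF (ltnSn i)) andbF addr0.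
apply/is_trig_mxP => i j ij; rewrite !mxE.
rewrite (_ : (i == j) = false); last by rewrite -val_eqE /= ltn_eqF.
by rewrite (gtn_eqF (ltn_trans ij (ltnSn j))) andbF addr0.
Qed.

Lemma det_esymz_shift k m (w : 'I_k -> int) :
  \det (\matrix_(i < k, j < k) esymz x (m + i) (i%:Z + w j)) =
  \det (\matrix_(i < k, j < k) esymz x m (i%:Z + w j)).
Proof.
have shift0 s : \det (@shift_mx k m s w) = \det (shift_mx m 0 w).
  by elim: s => // s IH; rewrite det_shift_mxS.
transitivity (\det (@shift_mx k m k w)).
  by congr (\det _); apply/matrixP => i j; rewrite !mxE (minn_idPl (ltnW (ltn_ord i))).
by rewrite shift0; congr (\det _); apply/matrixP => i j; rewrite !mxE minn0 addn0.
Qed.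

End JacobiTrudiDeterminant.

Section Tableaux.
Variables (R : comPzRingType) (x : nat -> R) (nr nc : nat).

Local Notation cell := ('I_nr * 'I_nc)%type.

(* Shapes are given by their column lengths [c] inside an [nr] x [nc] box;
   a tableau is a filling of the box by 'I_m.+1, with 0 outside the shape. *)
Definition in_shape (c : nat -> nat) (p : cell) : bool := (p.1 < c p.2)%N.

Definition is_tab m (c : nat -> nat) (T : {ffun cell -> 'I_m.+1}) : bool :=
  [forall p : cell, in_shape c p == (0 < T p)%N] &&
  [forall p : cell, forall q : cell,
     in_shape c p && in_shape c q ==>
     ((((p.1 == q.1 :> nat) && (p.2.+1 == q.2 :> nat)) ==> (T p <= T q)%N) &&
      (((p.1.+1 == q.1 :> nat) && (p.2 == q.2 :> nat)) ==> (T p < T q)%N))].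

Definition tab_weight m (c : nat -> nat) (T : {ffun cell -> 'I_m.+1}) : R :=
  \prod_(p | in_shape c p) x (T p).-1.

Definition tab_sum m (c : nat -> nat) : R :=
  \sum_(T : {ffun cell -> 'I_m.+1} | is_tab c T) tab_weight c T.

Lemma is_tabP m c (T : {ffun cell -> 'I_m.+1}) : reflect
  [/\ forall p, in_shape c p = (0 < T p)%N,
      forall p q, in_shape c p -> in_shape c q ->
        p.1 = q.1 :> nat -> p.2.+1 = q.2 :> nat -> (T p <= T q)%N &
      forall p q, in_shape c p -> in_shape c q ->
        p.1.+1 = q.1 :> nat -> p.2 = q.2 :> nat -> (T p < T q)%N]
  (is_tab c T).
Proof.
apply: (iffP andP) => [[/forallP shT /forallP rowcol] | [shT row col]]; split.
- by move=> p; exact: (eqP (shT p)).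
- move=> p q pc qc e1 e2; move/forallP: (rowcol p) => /(_ q).
  by rewrite pc qc e1 e2 !eqxx => /andP[].
- move=> p q pc qc e1 e2; move/forallP: (rowcol p) => /(_ q).
  by rewrite pc qc e1 e2 !eqxx => /andP[].
- by apply/forallP => p; rewrite shT.
- apply/forallP => p; apply/forallP => q; apply/implyP => /andP[pc qc].
  by apply/andP; split; apply/implyP => /andP[/eqP e1 /eqP e2]; [apply: row | apply: col].
Qed.

Definition is_shape (c : nat -> nat) : Prop :=
  [/\ forall j, (c j.+1 <= c j)%N, forall j, (c j <= nr)%N
    & forall j, (nc <= j)%N -> c j = 0%N].

Variable k : nat.
Hypothesis nc_le_k : (nc <= k)%N.

Section Recursion.
Variables (m : nat) (c : nat -> nat).
Hypothesis c_shape : is_shape c.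

Lemma shape_col_lt j : (0 < c j)%N -> (j < nc)%N.
Proof. by case: c_shape => _ _ c0 cj; rewrite ltnNge; apply/negP => /c0; lia. Qed.

Definition max_cols (T : {ffun cell -> 'I_m.+2}) : {set 'I_k} :=
  [set j : 'I_k | [exists p : cell, (p.2 == j :> nat) && (T p == m.+1 :> nat)]].

Definition strip_cell (S : {set 'I_k}) (p : cell) : bool :=
  (p.1.+1 == c p.2) && memn S p.2.

Definition shape_rem (S : {set 'I_k}) (j : nat) : nat := (c j - memn S j)%N.

Lemma max_entry_bottom (T : {ffun cell -> 'I_m.+2}) p :
  is_tab c T -> T p = m.+1 :> nat -> p.1.+1 = c p.2.
Proof.
case/is_tabP => shT _ col Tp.
have pc : in_shape c p by rewrite shT Tp.
have pc' : (p.1.+1 <= c p.2)%N := pc.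
apply/eqP; rewrite eqn_leq pc' /= leqNgt; apply/negP => below.
case: c_shape => _ c_le _.
have lt' : (p.1.+1 < nr)%N by apply: leq_trans below (c_le _).
have := col p (Ordinal lt', p.2) pc below erefl erefl; rewrite Tp.
by move: (ltn_ord (T (Ordinal lt', p.2))); lia.
Qed.

Lemma max_entry_strip_cell (T : {ffun cell -> 'I_m.+2}) p :
  is_tab c T -> (T p == m.+1 :> nat) = strip_cell (max_cols T) p.
Proof.
move=> tT; apply/eqP/andP => [Tp | [/eqP pb /existsP[j /andP[jT /eqP ej]]]].
  split; first by rewrite (max_entry_bottom tT Tp).
  apply/existsP; exists (widen_ord nc_le_k p.2); rewrite eqxx andbT inE.
  by apply/existsP; exists p; rewrite eqxx Tp eqxx.
move: jT; rewrite inE => /existsP[q /andP[/eqP eq2 /eqP Tq]].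
have := max_entry_bottom tT Tq; rewrite eq2 ej -pb => -[eq1].
suff -> : p = q by [].
case: p q eq1 eq2 ej {pb Tq} => [p1 p2] [q1 q2] /= e1 e2 e3.
by congr pair; apply: val_inj => /=; congruence.
Qed.

Lemma hstrip_max_cols (T : {ffun cell -> 'I_m.+2}) : is_tab c T -> hstrip c (max_cols T).
Proof.
move=> tT; apply/forallP => j; apply/implyP; rewrite inE.
move=> /existsP[p /andP[/eqP pj /eqP Tp]].
have pb := max_entry_bottom tT Tp.
case/is_tabP: (tT) => shT row _.
apply/andP; split; first by rewrite -pj -pb.
apply/implyP => jk; apply/orP; case: (ltnP (c j.+1) (c j)) => [|cle]; [by left | right].
have j1c : (j.+1 < nc)%N by apply: shape_col_lt; apply: leq_trans cle; rewrite -pj -pb.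
pose q : cell := (p.1, Ordinal j1c).
have pc : in_shape c p by rewrite shT Tp.
have qc : in_shape c q by rewrite /in_shape /q /=; move: cle; rewrite -pj -pb.
have := row p q pc qc erefl (congr1 S pj); rewrite Tp => Tq.
apply/existsP; exists (Ordinal jk); rewrite /= eqxx andbT inE; apply/existsP; exists q.
by rewrite eqxx /=; move: (ltn_ord (T q)) Tq; lia.
Qed.

Definition tab_extend (S : {set 'I_k}) (T : {ffun cell -> 'I_m.+1}) : {ffun cell -> 'I_m.+2} :=
  [ffun p => if strip_cell S p then ord_max else widen_ord (leqnSn _) (T p)].

Definition tab_restrict (T : {ffun cell -> 'I_m.+2}) : {ffun cell -> 'I_m.+1} :=
  [ffun p => inord (if T p == m.+1 :> nat then 0%N else T p)].

Lemma tab_extendE S T p :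
  tab_extend S T p = (if strip_cell S p then m.+1 else T p) :> nat.
Proof. by rewrite ffunE; case: ifP. Qed.

Lemma tab_restrictE (T : {ffun cell -> 'I_m.+2}) p :
  tab_restrict T p = (if T p == m.+1 :> nat then 0%N else T p) :> nat.
Proof. by rewrite ffunE inordK //; case: eqP => // ne; move: (ltn_ord (T p)); lia. Qed.

Lemma in_shape_rem S p : in_shape (shape_rem S) p = in_shape c p && ~~ strip_cell S p.
Proof.
rewrite /in_shape /shape_rem /strip_cell; case: (memn S p.2) => /=.
  by apply/idP/andP => [lt | [lt /eqP ne]]; [split; [|apply/eqP] | ]; lia.
by rewrite subn0 andbF andbT.
Qed.

Lemma strip_cell_in_shape S p : strip_cell S p -> in_shape c p.
Proof. by case/andP => /eqP pb _; rewrite /in_shape -pb. Qed.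

Lemma strip_cell_of_col S (j : 'I_k) : hstrip c S -> j \in S ->
  exists p : cell, strip_cell S p /\ p.2 = j :> nat.
Proof.
move=> strip jS; have [cj _] := hstripP strip jS.
have [_ c_le _] := c_shape.
have i_lt : ((c j).-1 < nr)%N by move: (c_le j); lia.
exists (Ordinal i_lt, Ordinal (shape_col_lt cj)); split => //.
by rewrite /strip_cell /= memnE jS andbT; apply/eqP; lia.
Qed.

Lemma is_tab_extend S T : hstrip c S -> is_tab (shape_rem S) T -> is_tab c (tab_extend S T).
Proof.
move=> strip /is_tabP[shT row col]; have [c_decr _ _] := c_shape.
apply/is_tabP; split.
- move=> p; rewrite tab_extendE; case sp: (strip_cell S p).
    by rewrite (strip_cell_in_shape sp).
  by rewrite -shT in_shape_rem sp andbT.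
- move=> p q pc qc e1 e2; rewrite !tab_extendE.
  case sq: (strip_cell S q); first by case: (strip_cell S p) => //; move: (ltn_ord (T p)); lia.
  case sp: (strip_cell S p); last by apply: row; rewrite // in_shape_rem ?pc ?qc ?sp ?sq.
  exfalso; move: sp => /andP[/eqP pb pS].
  have jS : widen_ord nc_le_k p.2 \in S by rewrite -memnE.
  have jk : ((widen_ord nc_le_k p.2).+1 < k)%N by rewrite /= e2; apply: leq_trans (ltn_ord q.2) _.
  have qc' : (q.1 < c q.2)%N := qc.
  have [_ /(_ jk) /= [lt | qS]] := hstripP strip jS; first by move: qc'; rewrite -e2 -e1; lia.
  move/negbT: sq; rewrite /strip_cell negb_and -e2 qS orbF -e1 pb.
  by move: qc' (c_decr p.2); rewrite -e2 -e1; lia.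
- move=> p q pc qc e1 e2; rewrite !tab_extendE.
  case sp: (strip_cell S p).
    by move: sp qc => /andP[/eqP pb _]; rewrite /in_shape -e2 -e1 pb ltnn.
  case sq: (strip_cell S q); first by move: (ltn_ord (T p)).
  by apply: col; rewrite // in_shape_rem ?pc ?qc ?sp ?sq.
Qed.

Lemma max_cols_extend S T : hstrip c S -> is_tab (shape_rem S) T -> max_cols (tab_extend S T) = S.
Proof.
move=> strip tT; apply/setP => j; rewrite inE; apply/existsP/idP.
  move=> [p /andP[/eqP pj]]; rewrite tab_extendE.
  case sp: (strip_cell S p); last by move: (ltn_ord (T p)); lia.
  by move: sp => /andP[_]; rewrite pj memnE.
move=> jS; have [p [sp pj]] := strip_cell_of_col strip jS.
by exists p; rewrite pj eqxx tab_extendE sp eqxx.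
Qed.

Lemma tab_extendK S T : is_tab (shape_rem S) T -> tab_restrict (tab_extend S T) = T.
Proof.
move=> /is_tabP[shT _ _]; apply/ffunP => p; apply: val_inj => /=.
rewrite tab_restrictE tab_extendE; case sp: (strip_cell S p); rewrite ?eqxx.
  by move: (shT p); rewrite in_shape_rem sp andbF; case: (T p) => -[].
by case: eqP => // e; move: (ltn_ord (T p)); lia.
Qed.

Lemma tab_restrictK T : is_tab c T -> tab_extend (max_cols T) (tab_restrict T) = T.
Proof.
move=> tT; apply/ffunP => p; apply: val_inj => /=.
by rewrite tab_extendE -max_entry_strip_cell // tab_restrictE; case: eqP.
Qed.

Lemma is_tab_restrict T : is_tab c T -> is_tab (shape_rem (max_cols T)) (tab_restrict T).
Proof.
move=> tT; have maxE p := max_entry_strip_cell p tT.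
case/is_tabP: (tT) => shT row col; apply/is_tabP; split.
- by move=> p; rewrite in_shape_rem -maxE tab_restrictE; case: eqP; rewrite ?andbF ?andbT.
- move=> p q; rewrite !in_shape_rem -!maxE => /andP[pc /negbTE sp] /andP[qc /negbTE sq].
  by rewrite !tab_restrictE sp sq; apply: row.
- move=> p q; rewrite !in_shape_rem -!maxE => /andP[pc /negbTE sp] /andP[qc /negbTE sq].
  by rewrite !tab_restrictE sp sq; apply: col.
Qed.

Lemma card_strip_cells S : hstrip c S -> #|[set p | strip_cell S p]| = #|S|.
Proof.
move=> strip.
rewrite -(@card_in_imset _ _ (fun p : cell => widen_ord nc_le_k p.2)); last first.
  move=> [p1 p2] [q1 q2]; rewrite !inE => /andP[/eqP pb _] /andP[/eqP qb _] /(congr1 val) /= e2.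
  move: pb qb; rewrite /= (val_inj e2) => pb qb.
  by congr pair; apply: val_inj; apply/succn_inj; rewrite pb qb.
congr #|pred_of_set _|; apply/setP => j; apply/imsetP/idP.
  by move=> [p]; rewrite inE => /andP[_]; rewrite -memnE => + ->.
move=> jS; have [p [sp pj]] := strip_cell_of_col strip jS.
by exists p; rewrite ?inE //; apply: val_inj.
Qed.

Lemma tab_weight_extend S T : hstrip c S ->
  tab_weight c (tab_extend S T) = x m ^+ #|S| * tab_weight (shape_rem S) T.
Proof.
move=> strip; rewrite /tab_weight (bigID (strip_cell S)) /=; congr (_ * _).
  rewrite -(card_strip_cells strip) -prodr_const; apply: eq_big => p.
    by rewrite inE; case: (boolP (strip_cell S p)) => [/strip_cell_in_shape -> |]; rewrite ?andbF.
  by move=> /andP[_ sp]; rewrite tab_extendE sp.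
apply: eq_big => p; first by rewrite in_shape_rem.
by move=> /andP[_ /negbTE sp]; rewrite tab_extendE sp.
Qed.

Lemma tab_sumS : tab_sum m.+1 c =
  \sum_(S : {set 'I_k} | hstrip c S) x m ^+ #|S| * tab_sum m (shape_rem S).
Proof.
rewrite /tab_sum (partition_big max_cols (hstrip c)); last exact: hstrip_max_cols.
apply: eq_bigr => S strip.
rewrite (reindex_onto (tab_extend S) tab_restrict); last first.
  by move=> T /andP[tT /eqP <-]; rewrite tab_restrictK.
rewrite big_distrr /=; apply: eq_big => T; last by rewrite tab_weight_extend.
case: (boolP (is_tab (shape_rem S) T)) => tT.
  by rewrite is_tab_extend // max_cols_extend // tab_extendK // !eqxx.
apply/negbTE/negP => /andP[/andP[tU /eqP maxU] /eqP rU].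
by move/negP: tT; apply; rewrite -rU -[X in shape_rem X]maxU; apply: is_tab_restrict.
Qed.

Lemma is_shape_rem S : hstrip c S -> is_shape (shape_rem S).
Proof.
move=> strip; have [c_decr c_le c0] := c_shape; split => [j|j|j jn]; rewrite /shape_rem.
- case: (ltnP j.+1 k) => jk; last by rewrite memn_out // c0 //; apply: leq_trans nc_le_k jk.
  case jS: (memn S j); last by move: (c_decr j); lia.
  move: jS => /existsP[i /andP[iS /eqP ij]].
  have [ci /(_ (ltac:(rewrite ij //))) ] := hstripP strip iS; rewrite ij in ci *.
  by case=> [lt | ->] /=; [case: (memn S j.+1) => /=; lia | move: (c_decr j); lia].
- by move: (c_le j); lia.
- by rewrite c0.
Qed.

End Recursion.

Lemma tab_sum0 c : is_shape c -> tab_sum 0 c = (c 0%N == 0%N)%:R.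
Proof.
move=> c_shape; have [c_decr c_le _] := c_shape; rewrite /tab_sum.
case: (posnP (c 0%N)) => c0.
  have c_eq0 j : c j = 0%N by elim: j => // j IH; move: (c_decr j); rewrite IH; lia.
  pose T0 : {ffun cell -> 'I_1} := [ffun _ => ord0].
  rewrite (big_pred1 T0); first by rewrite /tab_weight big_pred0 // => p; rewrite /in_shape c_eq0.
  move=> T; have -> : T = T0 by apply/ffunP => p; rewrite ffunE; apply: val_inj; case: (T p) => -[].
  rewrite /= eqxx; apply/is_tabP; split => [p|p q|p q]; rewrite /in_shape ?c_eq0 //.
  by rewrite ffunE.
rewrite big_pred0 // => T; apply/negP => /is_tabP[shT _ _].
have r0 : (0 < nr)%N by apply: leq_trans c0 (c_le 0%N).
have := shT (Ordinal r0, Ordinal (shape_col_lt c_shape c0)).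
by rewrite /in_shape /= c0; case: (T _) => -[].
Qed.

Lemma tab_sum_jt_det m c : is_shape c -> tab_sum m c = jt_det x k m c.
Proof.
elim: m c => [|m IH] c c_shape; have [c_decr _ c0] := c_shape.
  by rewrite tab_sum0 // jt_det0 // c0.
rewrite tab_sumS // jt_detS //; apply: eq_bigr => S strip.
by rewrite IH //; apply: is_shape_rem.
Qed.

End Tableaux.

Section ConjugatePartition.
Variable s : seq nat.
Hypothesis s_sorted : sorted geq s.

Lemma count_gt_sorted i j : (j < count (fun l => i < l) s)%N = (i < nth 0%N s j)%N.
Proof.
elim: s s_sorted j => [|a t IH] srt j /=; first by rewrite nth_nil.
have le_a : {in t, forall l, l <= a}%N.
  by apply/allP; apply: (order_path_min (rev_trans leq_trans) srt).
have {}IH := IH (path_sorted srt).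
case: (ltnP i a) => [ia | ai]; first by case: j => [|j] //=; rewrite add1n ltnS IH.
have -> : count (fun l => i < l)%N t = 0%N.
  apply/eqP; rewrite -leqn0 leqNgt -has_count; apply/hasPn => l lt.
  by rewrite -leqNgt (leq_trans (le_a l lt) ai).
case: j => [|j] /=; first by rewrite [RHS]ltnNge ai.
case: (ltnP j (size t)) => jt; last by rewrite nth_default.
by rewrite [RHS]ltnNge (leq_trans (le_a _ (mem_nth 0%N jt)) ai).
Qed.

Lemma leq_nth_bigmax j : (nth 0%N s j <= \max_(l <- s) l)%N.
Proof.
case: (ltnP j (size s)) => js; last by rewrite nth_default.
exact: (@leq_bigmax_seq _ _ xpredT id _ (mem_nth 0%N js)).
Qed.

Lemma in_diag_conj_part i j : in_diag (conj_part s) i j = (i < nth 0%N s j)%N.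
Proof.
rewrite /in_diag /conj_part.
case: (ltnP i (\max_(l <- s) l)) => imax; first by rewrite nth_mkseq // count_gt_sorted.
by rewrite nth_default ?size_mkseq // ltn0 ltnNge (leq_trans (leq_nth_bigmax j) imax).
Qed.

Lemma head_conj_part_le : (head 0%N (conj_part s) <= size s)%N.
Proof.
rewrite leqNgt -nth0; apply/negP => gt.
by have := in_diag_conj_part 0 (size s); rewrite /in_diag gt nth_default.
Qed.

Lemma is_shape_conj_part :
  is_shape (size (conj_part s)) (head 0%N (conj_part s)) (nth 0%N s).
Proof.
split => [j|j|j].
- case: (ltnP j.+1 (size s)) => js; last by rewrite (nth_default 0%N js).
  by move/(sortedP 0): s_sorted => /(_ j js).
- by rewrite size_mkseq leq_nth_bigmax.
- rewrite -nth0 => hj; apply/eqP; rewrite -leqn0 leqNgt -in_diag_conj_part.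
  by rewrite /in_diag -leqNgt.
Qed.

End ConjugatePartition.

Lemma schur_tab_sum (R : comPzRingType) (x : nat -> R) lam m (c : nat -> nat) :
  (forall i j, in_diag lam i j = (i < c j)%N) ->
  schur lam m x = tab_sum x (size lam) (head 0%N lam) m c.
Proof.
move=> diagE; rewrite /schur /tab_sum; apply: eq_big => [T|T _].
  rewrite /is_ssyt /is_tab; congr andb.
    by apply: eq_forallb => p; rewrite diagE.
  by apply: eq_forallb => p; apply: eq_forallb => q; rewrite !diagE.
by rewrite /tab_weight; apply: eq_bigl => p; rewrite diagE.
Qed.

Lemma nth_sorted_ltn_le (s : seq nat) n j : sorted ltn s -> all (fun v => v <= n)%N s ->
  (j < size s)%N -> (nth 0%N s j + size s <= n + j.+1)%N.
Proof.
elim: s j => [|a s IH] j //= srt /andP[an alls] js.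
have srt' := path_sorted srt.
case: j js => [|j] js /=; last by have := IH j srt' alls js; lia.
case: s {js} srt srt' alls IH => [|b s] /= srt srt' alls IH; first by lia.
by move: srt => /andP[ab _]; have := IH 0%N srt' alls (ltn0Sn _); rewrite /=; lia.
Qed.

Section OnesPositions.
Variable alpha : seq bool.

Lemma size_ones_pos : size (ones_pos alpha) = count id alpha.
Proof. by rewrite size_map size_filter -[in RHS](mkseq_nth false alpha) /mkseq count_map. Qed.

Lemma sorted_ones_pos : sorted ltn (ones_pos alpha).
Proof. by rewrite sorted_map; apply: (sorted_filter ltn_trans); apply: iota_ltn_sorted. Qed.

Lemma ones_pos_le : all (fun v => v <= size alpha)%N (ones_pos alpha).
Proof. by apply/allP => v /mapP[i]; rewrite mem_filter mem_iota => /and3P[_ _ ilt] ->. Qed.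

Lemma nth_ones_pos_le j : (j < count id alpha)%N ->
  (nth 0%N (ones_pos alpha) j <= size alpha - count id alpha + j.+1)%N.
Proof.
move=> jk; have := nth_sorted_ltn_le (j := j) sorted_ones_pos ones_pos_le.
by rewrite size_ones_pos => /(_ jk); have := count_size id alpha; lia.
Qed.

Lemma size_lam_conj : size (lam_conj alpha) = count id alpha.
Proof. by rewrite size_map size_iota. Qed.

Lemma nth_lam_conj j : nth 0%N (lam_conj alpha) j =
  if (j < count id alpha)%N
  then (size alpha - count id alpha + j.+1 - nth 0%N (ones_pos alpha) j)%N else 0%N.
Proof.
case: ltnP => jk; first by rewrite (nth_map 0%N) ?size_iota // nth_iota.
by rewrite nth_default // size_lam_conj.
Qed.

Lemma sorted_lam_conj : sorted geq (lam_conj alpha).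
Proof.
apply/(sortedP 0) => j; rewrite size_lam_conj => jk.
rewrite /= !nth_lam_conj jk (ltnW jk).
have : (nth 0%N (ones_pos alpha) j < nth 0%N (ones_pos alpha) j.+1)%N.
  by apply: (sorted_ltn_nth ltn_trans 0 sorted_ones_pos); rewrite ?inE /= ?size_ones_pos // ltnW.
lia.
Qed.

End OnesPositions.

Theorem lemma3p8 (R : comPzRingType) (n : nat) (alpha : seq bool)
    (Hsize : size alpha = n) (x : nat -> R) :
  let k := count id alpha in
  let u := ones_pos alpha in
  schur (lam_alpha alpha) (n - k) x =
    \det (\matrix_(i < k, j < k)
            esymD (n - k) (n - k + i.+1) (nth 0%N u j) x)
  /\
  \det (\matrix_(i < k, j < k)
            esymD (n - k) (n - k + i.+1) (nth 0%N u j) x) =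
    \det (\matrix_(i < k, j < k)
            esymD (n - k + i) (n - k + i.+1) (nth 0%N u j) x).
Proof.
rewrite /= -Hsize; set k := count id alpha; set u := ones_pos alpha; set m := (_ - k)%N.
pose w (j : 'I_k) : int := m.+1%:Z - (nth 0%N u j)%:Z.
have esymDE d (i j : 'I_k) : esymD d (m + i.+1) (nth 0%N u j) x = esymz x d (i%:Z + w j).
  by rewrite esymD_esymz /w; congr esymz; lia.
have srt := sorted_lam_conj alpha.
split.
  rewrite /lam_alpha (schur_tab_sum _ _ (in_diag_conj_part srt)).
  have head_le : (head 0%N (conj_part (lam_conj alpha)) <= k)%N.
    by rewrite -[k](size_lam_conj alpha) head_conj_part_le.
  rewrite (tab_sum_jt_det x head_le m (is_shape_conj_part srt)).
  congr (\det _); apply/matrixP => i j; rewrite !mxE esymDE /w nth_lam_conj ltn_ord.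
  by have := nth_ones_pos_le (ltn_ord j); rewrite /m /u /k => le; congr esymz; lia.
transitivity (\det (\matrix_(i < k, j < k) esymz x m (i%:Z + w j))).
  by congr (\det _); apply/matrixP => i j; rewrite !mxE esymDE.
by rewrite -det_esymz_shift; congr (\det _); apply/matrixP => i j; rewrite !mxE esymDE.
Qed.
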